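(* Let $I$ be an LBFLO instance with optimal solution $O$ of cost $Cost_I(O)$, and let $\delta\ge 0$. For each facility $i\in\mathcal{F}$ let $N_i$ be a set of $L_i$ clients nearest to $i$ (with respect to $c$). Let $I'$ be the FLO instance with the same facilities, clients, metric and outlier bound $t$ as $I$, with the lower bounds removed, and with opening costs $f'_i = f_i + \delta\sum_{j\in N_i} c(i,j)$. Then the optimal cost of $I'$ is at most $(1+\delta)\,Cost_I(O)$.
   Context: FLO: facilities $\mathcal{F}$, clients $\mathcal{C}$ with $|\mathcal{C}|=m$, opening costs $f_i\ge0$, metric $c$ on $\mathcal{F}\cup\mathcal{C}$, integer $t\ge0$; a feasible solution opens $F'\subseteq\mathcal{F}$ and assigns at least $m-t$ clients to facilities in $F'$, with cost $\sum_{i\in F'} f_i+\sum_{j\text{ assigned}} c(j,\sigma(j))$. LBFLO: additionally each $i\in\mathcal{F}$ has a nonnegative integer lower bound $L_i$, and every opened facility must be assigned at least $L_i$ clients. *)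

From HB Require Import structures.
From mathcomp Require Import all_boot all_order all_algebra.
Set Implicit Arguments. Unset Strict Implicit. Unset Printing Implicit Defensive.
Import Order.TTheory GRing.Theory Num.Theory.
Local Open Scope ring_scope.

Definition is_metric (R : realFieldType) (T : Type) (d : T -> T -> R) : Prop :=
  (forall x, d x x = 0) /\ (forall x y, 0 <= d x y) /\
  (forall x y, d x y = d y x) /\ (forall x y z, d x z <= d x y + d y z).

(* A solution: a set of opened facilities and an assignment of clients;
   [None] means the client is an outlier (not assigned). *)
Definition solution (F C : finType) := ({set F} * (C -> option F))%type.

Section Defs.
Variables (R : realFieldType) (F C : finType).

Definition assigned_to (s : solution F C) (i : F) : {set C} :=
  [set j | s.2 j == Some i].

Definition assigned (s : solution F C) : {set C} :=
  [set j | s.2 j != None].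

Definition flo_feasible (t : nat) (s : solution F C) : Prop :=
  (forall j i, s.2 j = Some i -> i \in s.1) /\
  (#|C| - t <= #|assigned s|)%N.

Definition lbflo_feasible (t : nat) (L : F -> nat) (s : solution F C) : Prop :=
  flo_feasible t s /\ (forall i, i \in s.1 -> (L i <= #|assigned_to s i|)%N).

Definition fc (d : F + C -> F + C -> R) (i : F) (j : C) : R := d (inl i) (inr j).

Definition cost (f : F -> R) (d : F + C -> F + C -> R) (s : solution F C) : R :=
  \sum_(i in s.1) f i +
  \sum_(j : C) (match s.2 j with Some i => fc d i j | None => 0 end).

Definition nearest_clients (d : F + C -> F + C -> R) (L : F -> nat) (i : F)
    (N : {set C}) : Prop :=
  #|N| = L i /\ forall j j', j \in N -> j' \notin N -> fc d i j <= fc d i j'.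

End Defs.

From HB Require Import structures.
From mathcomp Require Import all_boot all_order all_algebra.
From mathcomp Require Import lra.
Import Order.TTheory GRing.Theory Num.Theory.
Local Open Scope ring_scope.

(* Proof idea (lower bounds can be paid for by the opening costs).
   Write f' for the modified opening costs f'_i = f_i + delta * D_i, where
   D_i = sum_{j in N_i} c(i,j) is the distance from i to its L_i nearest
   clients.  Any LBFLO-feasible solution s assigns at least L_i clients to
   every open facility i, and those clients are at least as far from i as
   the L_i nearest ones; hence D_i is at most the connection cost paid at i,
   and summing over open facilities gives
     cost_{f'}(s) <= opening_f(s) + (1 + delta) * connection(s)
                  <= (1 + delta) * cost_f(s).
   Applied to O, and combined with the existence of an optimal FLO solution
   for f' (solutions are essentially drawn from a finite set and O is FLO
   feasible), this yields the theorem. *)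

Section NearestSums.
Variables (R : realDomainType) (T : finType) (g : T -> R).
Hypothesis g_ge0 : forall x, 0 <= g x.

Lemma sum_le_dominated (X Y : {set T}) :
  (#|X| <= #|Y|)%N -> (forall x y, x \in X -> y \in Y -> g x <= g y) ->
  \sum_(x in X) g x <= \sum_(y in Y) g y.
Proof.
move=> card_le dominated.
have [Y0 | [y0 y0Y]] := set_0Vmem Y.
  by move: card_le; rewrite Y0 cards0 leqn0 cards_eq0 => /eqP ->.
have [m mY m_min] := @arg_minP _ R _ y0 (mem Y) g y0Y.
have sumX_le : \sum_(x in X) g x <= \sum_(x in X) g m.
  by apply: ler_sum => x xX; exact: dominated.
have sumY_ge : \sum_(y in Y) g m <= \sum_(y in Y) g y.
  by apply: ler_sum => y yY; exact: m_min.
apply: le_trans sumX_le (le_trans _ sumY_ge).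
by rewrite !sumr_const; exact: (ler_wpMn2l (g_ge0 m) card_le).
Qed.

(* A set N of "g-smallest" points has g-mass at most that of any set A with
   at least as many elements: compare N \ A against A \ N. *)
Lemma nearest_sum_le (N A : {set T}) :
  (#|N| <= #|A|)%N -> (forall x y, x \in N -> y \notin N -> g x <= g y) ->
  \sum_(x in N) g x <= \sum_(y in A) g y.
Proof.
move=> card_le nearest.
rewrite (big_setID A) [leRHS](big_setID N) /= setIC lerD2l.
apply: sum_le_dominated.
  have splitN := cardsID A N; have splitA := cardsID N A.
  rewrite setIC in splitA.
  by rewrite -(leq_add2l #|N :&: A|) splitN splitA.
by move=> x y; rewrite !inE => /andP[_ xN] /andP[yN _]; exact: nearest.
Qed.

End NearestSums.

Section SolutionCosts.
Variables (R : realFieldType) (F C : finType) (d : F + C -> F + C -> R).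
Hypothesis fc_ge0 : forall i j, 0 <= fc d i j.

Definition connection (s : solution F C) : R :=
  \sum_(j : C) (match s.2 j with Some i => fc d i j | None => 0 end).

Lemma costE (f : F -> R) (s : solution F C) :
  cost f d s = \sum_(i in s.1) f i + connection s.
Proof. by []. Qed.

(* Each client is assigned to at most one facility, so the costs paid per
   open facility add up to at most the total connection cost. *)
Lemma sum_assigned_le_connection (s : solution F C) :
  \sum_(i in s.1) \sum_(j in assigned_to s i) fc d i j <= connection s.
Proof.
pose a i j := if s.2 j == Some i then fc d i j else 0.
have a_ge0 i j : 0 <= a i j by rewrite /a; case: eqP.
have -> : \sum_(i in s.1) \sum_(j in assigned_to s i) fc d i j
          = \sum_(i in s.1) \sum_j a i j.
  by apply: eq_bigr => i _; rewrite big_mkcond; apply: eq_bigr => j _; rewrite inE.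
apply: (@le_trans _ _ (\sum_i \sum_j a i j)).
  rewrite [leRHS](bigID (mem s.1)) /= lerDl.
  by apply: sumr_ge0 => i _; apply: sumr_ge0.
rewrite exchange_big; apply: ler_sum => j _; rewrite /a.
case: (s.2 j) => [i0|]; last by rewrite big1.
rewrite (bigD1 i0) //= eqxx big1 ?addr0 // => i ne_i.
by case: eqP => // -[eq_i]; rewrite eq_i eqxx in ne_i.
Qed.

(* Charging delta times the nearest-client distances on top of the opening
   costs increases the cost of an LBFLO-feasible solution by at most a factor
   1 + delta, since its open facilities already pay at least that much. *)
Lemma lower_bound_charge_le (f : F -> R) (t : nat) (L : F -> nat)
    (N : F -> {set C}) (delta : R) (s : solution F C) :
  (forall i, 0 <= f i) -> 0 <= delta -> lbflo_feasible t L s ->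
  (forall i, nearest_clients d L i (N i)) ->
  cost (fun i => f i + delta * \sum_(j in N i) fc d i j) d s
    <= (1 + delta) * cost f d s.
Proof.
move=> f_ge0 delta_ge0 [_ lower_bounds] nearestN.
have nearest_le_assigned : \sum_(i in s.1) \sum_(j in N i) fc d i j
                           <= connection s.
  apply: le_trans (sum_assigned_le_connection s).
  apply: ler_sum => i open_i; have [cardN nearN] := nearestN i.
  by apply: nearest_sum_le => //; rewrite cardN; exact: lower_bounds.
have opening_ge0 : 0 <= \sum_(i in s.1) f i by exact: sumr_ge0.
have connection_ge0 : 0 <= connection s.
  by apply: sumr_ge0 => j _; case: (s.2 j).
have := ler_wpM2l delta_ge0 nearest_le_assigned.
have := mulr_ge0 delta_ge0 opening_ge0.
rewrite !costE big_split /= -mulr_sumr; lra.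
Qed.

End SolutionCosts.

Section OptimumExists.
Variables (R : realFieldType) (F C : finType).

(* Solutions up to extensional equality of the assignment form a finite type. *)
Definition fin_solution := ({set F} * {ffun C -> option F})%type.

Definition of_fin (x : fin_solution) : solution F C := (x.1, fun j => x.2 j).
Definition to_fin (s : solution F C) : fin_solution := (s.1, [ffun j => s.2 j]).

Lemma cost_to_fin (f : F -> R) (d : F + C -> F + C -> R) (s : solution F C) :
  cost f d (of_fin (to_fin s)) = cost f d s.
Proof. by rewrite /cost /=; congr (_ + _); apply: eq_bigr => j _; rewrite ffunE. Qed.

Definition flo_feasibleb (t : nat) (x : fin_solution) : bool :=
  [forall j, if x.2 j is Some i then i \in x.1 else true] &&
  (#|C| - t <= #|[set j | x.2 j != None]|)%N.

Lemma flo_feasiblebP (t : nat) (s : solution F C) :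
  flo_feasibleb t (to_fin s) <-> flo_feasible t s.
Proof.
rewrite /flo_feasibleb /flo_feasible /assigned /=.
have -> : [set j | [ffun j => s.2 j] j != None] = [set j | s.2 j != None].
  by apply/setP => j; rewrite !inE ffunE.
split=> [/andP[/forallP open_ok card_ok] | [open_ok card_ok]].
  by split=> // j i assign_j; have := open_ok j; rewrite ffunE assign_j.
apply/andP; split=> //; apply/forallP => j; rewrite ffunE.
by case assign_j: (s.2 j) => [i|] //; exact: open_ok assign_j.
Qed.

Lemma to_finK (x : fin_solution) : to_fin (of_fin x) = x.
Proof. by case: x => S a; congr (_, _); apply/ffunP => j; rewrite ffunE. Qed.

Lemma flo_optimum_exists (f : F -> R) (d : F + C -> F + C -> R) (t : nat)
    (s0 : solution F C) :
  flo_feasible t s0 ->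
  exists s, flo_feasible t s /\
            forall s', flo_feasible t s' -> cost f d s <= cost f d s'.
Proof.
move=> /flo_feasiblebP feas0.
have [x feas_x x_min] := @arg_minP _ R _ (to_fin s0) (flo_feasibleb t)
  (fun x => cost f d (of_fin x)) feas0.
exists (of_fin x); split; first by apply/flo_feasiblebP; rewrite to_finK.
move=> s' /flo_feasiblebP feas_s'; rewrite -(cost_to_fin f d s'); exact: x_min.
Qed.

End OptimumExists.

Theorem lemma1 (R : realFieldType) (F C : finType)
    (f : F -> R) (d : F + C -> F + C -> R) (t : nat) (L : F -> nat)
    (O : solution F C) (delta : R) (N : F -> {set C}) :
  is_metric d ->
  (forall i, 0 <= f i) ->
  0 <= delta ->
  lbflo_feasible t L O ->
  (forall s, lbflo_feasible t L s -> cost f d O <= cost f d s) ->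
  (forall i, nearest_clients d L i (N i)) ->
  exists s : solution F C,
    flo_feasible t s /\
    (forall s', flo_feasible t s' ->
       cost (fun i => f i + delta * \sum_(j in N i) fc d i j) d s
       <= cost (fun i => f i + delta * \sum_(j in N i) fc d i j) d s') /\
    cost (fun i => f i + delta * \sum_(j in N i) fc d i j) d s
      <= (1 + delta) * cost f d O.
Proof.
move=> [_ [d_ge0 _]] f_ge0 delta_ge0 O_lbflo _ nearestN.
have fc_ge0 i j : 0 <= fc d i j by exact: d_ge0.
have [s [s_feas s_opt]] :=
  @flo_optimum_exists R F C (fun i => f i + delta * \sum_(j in N i) fc d i j)
    d t O (proj1 O_lbflo).
exists s; split=> //; split=> //.
apply: le_trans (s_opt O (proj1 O_lbflo)) _.
exact: (@lower_bound_charge_le R F C d fc_ge0 f t L N delta O).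
Qed.
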